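(* Let $\mathcal{C}\subseteq\{\pm1\}^n$ be an $\epsilon$-balanced linear code, let $L\subseteq[n]$ with $|L|=\ell>0$, let $a\in\{\pm1\}^L$, and let $\mathcal{R}=\{c\in\mathcal{C}: c_j=a_j\text{ for all }j\in L\}$. If $\ell/n>2\epsilon$, then $$|\mathcal{R}|\le\frac{1-2\epsilon}{\ell/n-2\epsilon}.$$
   Context: The binary field $\mathbb{F}_2$ is represented by $\{\pm1\}$; a linear code is an $\mathbb{F}_2$-subspace of $\{\pm1\}^n$. A code is $\epsilon$-balanced if $(1/2-\epsilon)n\le d_H(c,c')\le(1/2+\epsilon)n$ for all distinct codewords $c,c'$, where $d_H$ is Hamming distance. $\mathcal{R}$ is the set of codewords of $\mathcal{C}$ whose entries at the positions in $L$ are fixed to the prescribed values $a$. *)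

From HB Require Import structures.
From mathcomp Require Import all_boot all_order all_algebra.
Set Implicit Arguments. Unset Strict Implicit. Unset Printing Implicit Defensive.
Import Order.TTheory GRing.Theory Num.Theory.
Local Open Scope ring_scope.

(* Words of length n over F_2 (the paper writes F_2 multiplicatively as {+-1};
   Hamming distance, linearity and restrictions are representation-independent). *)
Notation word n := 'rV['F_2]_n.

Definition dH n (c c' : word n) : nat := #|[set i : 'I_n | c 0 i != c' 0 i]|.

Definition eps_balanced (R : realFieldType) n (eps : R) (C : {vspace word n}) : Prop :=
  forall c c' : word n, c \in C -> c' \in C -> c != c' ->
    (1/2 - eps) * n%:R <= (dH c c')%:R /\ (dH c c')%:R <= (1/2 + eps) * n%:R.

Definition restr n (C : {vspace word n}) (L : {set 'I_n}) (a : word n) : {set word n} :=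
  [set c : word n | (c \in C) && [forall j in L, c 0 j == a 0 j]].

From HB Require Import structures.
From mathcomp Require Import all_boot all_order all_algebra.
From mathcomp Require Import ring lra.
Set Implicit Arguments.
Unset Strict Implicit.
Unset Printing Implicit Defensive.
Import Order.TTheory GRing.Theory Num.Theory.
Local Open Scope ring_scope.

(* Plotkin-style double counting over the set R of size m.  Summing the
   distances over all ordered pairs of R, balance gives at least
   m (m - 1) (1/2 - eps) n.  Columnwise, the positions in L contribute nothing
   and every other position separates at most m^2/2 ordered pairs, so the sum is
   at most (n - l) m^2 / 2.  Comparing the two bounds and dividing by m gives
   m (l - 2 eps n) <= (1 - 2 eps) n. *)

Section PairCounting.

Variable R : realFieldType.

Lemma F2_neq_sign (b b' : 'F_2) :
  ((b != b')%:R : R) = (1 - (-1) ^+ b * (-1) ^+ b') / 2.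
Proof. by case: b => [[|[|//]]] ?; case: b' => [[|[|//]]] ? /=; lra. Qed.

(* With signs s c = (-1)^(x c), the count is (m^2 - (sum_c s c)^2) / 2. *)
Lemma sum_pairs_neq_F2_le (T : finType) (S : {set T}) (x : T -> 'F_2) :
  \sum_(c in S) \sum_(c' in S) ((x c != x c')%:R : R) <= #|S|%:R ^+ 2 / 2.
Proof.
set s := fun c => (-1) ^+ x c : R.
have -> : \sum_(c in S) \sum_(c' in S) ((x c != x c')%:R : R)
          = (#|S|%:R ^+ 2 - (\sum_(c in S) s c) ^+ 2) / 2.
  have sumS1 : #|S|%:R = \sum_(c in S) (1 : R) by rewrite sumr_const.
  rewrite sumS1 !expr2 !mulr_suml -sumrB mulr_suml; apply: eq_bigr => c _.
  rewrite !mulr_sumr -sumrB mulr_suml; apply: eq_bigr => c' _.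
  by rewrite F2_neq_sign mulr1.
by rewrite ler_pM2r ?invr_gt0 // gerDl oppr_le0 sqr_ge0.
Qed.

Section Words.

Variable n : nat.

Lemma dH_agree_on (L : {set 'I_n}) (c c' : word n) :
  {in L, forall j, c 0 j = c' 0 j} ->
  (dH c c')%:R = \sum_(i in ~: L) ((c 0 i != c' 0 i)%:R : R).
Proof.
move=> agree; rewrite /dH -sum1_card natr_sum big_mkcond [RHS]big_mkcond /=.
apply: eq_bigr => i _; rewrite !inE.
by have [/agree ->|_] := boolP (i \in L); [rewrite eqxx | case: (_ != _)].
Qed.

Lemma sum_dH_agree_le (L : {set 'I_n}) (a : word n) (S : {set word n}) :
  {in S, forall c : word n, {in L, forall j, c 0 j = a 0 j}} ->
  \sum_(c in S) \sum_(c' in S) ((dH c c')%:R : R)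
    <= #|~: L|%:R * (#|S|%:R ^+ 2 / 2).
Proof.
move=> agree_a.
have agree c c' : c \in S -> c' \in S -> {in L, forall j, c 0 j = c' 0 j}.
  by move=> cS c'S j jL; rewrite agree_a // [RHS]agree_a.
under eq_bigr => c cS do under eq_bigr => c' c'S
  do rewrite (dH_agree_on (agree c c' cS c'S)).
under eq_bigr do rewrite exchange_big.
rewrite exchange_big mulr_natl -sumr_const; apply: ler_sum => i _.
exact: sum_pairs_neq_F2_le.
Qed.

Lemma sum_dH_ge (S : {set word n}) (d : R) :
  {in S &, forall c c', c != c' -> d <= (dH c c')%:R} ->
  #|S|%:R * ((#|S|%:R - 1) * d)
    <= \sum_(c in S) \sum_(c' in S) ((dH c c')%:R : R).
Proof.
move=> dist; rewrite mulr_natl -sumr_const; apply: ler_sum => c cS.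
have -> : (#|S|%:R - 1) * d = \sum_(c' in S :\ c) d.
  by rewrite sumr_const -[RHS]mulr_natl [#|S|](cardsD1 c) cS addnC natrD addrK.
rewrite (big_setD1 c cS) -[X in X <= _]add0r lerD //.
by apply: ler_sum => c' /setD1P [ne c'S]; apply: dist; rewrite // eq_sym.
Qed.

End Words.

Lemma plotkin_ratio_bound (m N l e : R) :
  0 < N -> l <= N -> 0 <= m -> 2 * e < l / N ->
  m * ((m - 1) * ((1/2 - e) * N)) <= (N - l) * (m ^+ 2 / 2) ->
  m <= (1 - 2 * e) / (l / N - 2 * e).
Proof.
move=> N_gt0 lN m_ge0 el pair_bound.
set q := l / N in el *.
have lq : l = q * N by rewrite /q divfK ?gt_eqF.
have q_le1 : q <= 1 by rewrite ler_pdivrMr // mul1r.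
rewrite ler_pdivlMr ?subr_gt0 //.
have [->|m_neq0] := eqVneq m 0; first by rewrite mul0r; lra.
have m_gt0 : 0 < m by rewrite lt_neqAle eq_sym m_neq0.
have pair_bound_m : m * ((m - 1) * (1/2 - e) * N) <= m * ((1 - q) * m / 2 * N).
  have -> : m * ((m - 1) * (1/2 - e) * N) = m * ((m - 1) * ((1/2 - e) * N)).
    by ring.
  have -> : m * ((1 - q) * m / 2 * N) = (N - l) * (m ^+ 2 / 2) by rewrite lq; ring.
  exact: pair_bound.
rewrite ler_pM2l // ler_pM2r // in pair_bound_m.
lra.
Qed.

End PairCounting.

Theorem lemma4 (R : realFieldType) (n : nat) (eps : R)
    (C : {vspace 'rV['F_2]_n}) (L : {set 'I_n}) (a : 'rV['F_2]_n) :
  eps_balanced eps C ->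
  (0 < #|L|)%N ->
  2 * eps < #|L|%:R / n%:R ->
  (#|restr C L a|%:R : R) <= (1 - 2 * eps) / (#|L|%:R / n%:R - 2 * eps).
Proof.
move=> balanced L_gt0 eps_lt.
set S := restr C L a.
have inS c : c \in S -> c \in C /\ {in L, forall j, c 0 j = a 0 j}.
  rewrite inE => /andP [cC /forallP agree]; split=> // j jL.
  exact/eqP/(implyP (agree j)).
have dist : {in S &, forall c c', c != c' -> (1/2 - eps) * n%:R <= (dH c c')%:R}.
  by move=> c c' /inS [cC _] /inS [c'C _] ne; have [] := balanced c c' cC c'C ne.
have := le_trans (sum_dH_ge dist) (sum_dH_agree_le R (fun c cS => (inS c cS).2)).
have LC : #|~: L|%:R = n%:R - #|L|%:R :> R.
  by apply/eqP; rewrite eq_sym subr_eq -natrD addnC cardsC card_ord.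
have L_le_n : (#|L| <= n)%N by rewrite -[n in (_ <= n)%N]card_ord max_card.
rewrite LC; apply: plotkin_ratio_bound => //.
- by rewrite ltr0n (leq_trans L_gt0).
- by rewrite ler_nat.
Qed.
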